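(* Let $\mathcal{K}$ be an autonomous 2-category and $\mathcal{E}$ an autonomous monoidal category. For any pair of pseudofunctors $\mathcal{F},\mathcal{G}:Del(\mathcal{E})\to\mathcal{K}$ the weak and strong centers coincide, and the inverse of a left half-braiding is a right half-braiding; that is, $\mathcal{Z}^{w\text{-}ps}_l(\mathcal{F},\mathcal{K},\mathcal{G})=\mathcal{Z}^{s\text{-}ps}_l(\mathcal{F},\mathcal{K},\mathcal{G})\cong\mathcal{Z}^{s\text{-}ps}_r(\mathcal{F},\mathcal{K},\mathcal{G})=\mathcal{Z}^{w\text{-}ps}_r(\mathcal{F},\mathcal{K},\mathcal{G})$, where the isomorphism sends $(M,\sigma)$ to $(M,\sigma^{-1})$.
   Context: A 2-category is autonomous if every 1-cell has a left and a right adjoint; a monoidal category is autonomous if every object has a left and a right dual (equivalently, its delooping is an autonomous 2-category). $Del(\mathcal{E})$ is the one-object bicategory with hom-category $\mathcal{E}$ and horizontal composition $\otimes$; write $\mathcal{F}(X)=\mathcal{F}_{*,*}(X)$. For pseudofunctors $\mathcal{F},\mathcal{G}$ (regarded via their lax structures $\mathcal{F}^2,\mathcal{F}^0$): $\mathcal{Z}^{w\text{-}ps}_l(\mathcal{F},\mathcal{K},\mathcal{G})$ is the category of colax natural transformations $\mathcal{F}\Rightarrow\mathcal{G}$ and modifications, i.e. pairs $(M,\sigma)$ with $M:\mathcal{F}( * )\to\mathcal{G}( * )$ and $\sigma_X:M\circ\mathcal{F}(X)\Rightarrow\mathcal{G}(X)\circ M$ natural in $X$ with $(\mathcal{G}^2_{Y,X}\circ1_M)\cdot(1\circ\sigma_X)\cdot(\sigma_Y\circ1)=\sigma_{Y\otimes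 X}\cdot(1_M\circ\mathcal{F}^2_{Y,X})$, $\sigma_I\cdot(1_M\circ\mathcal{F}^0)=\mathcal{G}^0\circ1_M$, and morphisms 2-cells $f:M\Rightarrow N$ with $(1\circ f)\cdot\sigma_X=\tau_X\cdot(f\circ1)$. $\mathcal{Z}^{w\text{-}ps}_r(\mathcal{F},\mathcal{K},\mathcal{G})$ is the category of lax natural transformations, i.e. pairs $(M,\tilde\sigma)$ with $\tilde\sigma_X:\mathcal{G}(X)\circ M\Rightarrow M\circ\mathcal{F}(X)$ natural with $\tilde\sigma_{Y\otimes X}\cdot(\mathcal{G}^2_{Y,X}\circ1_M)=(1_M\circ\mathcal{F}^2_{Y,X})\cdot(\tilde\sigma_Y\circ1)\cdot(1\circ\tilde\sigma_X)$, $\tilde\sigma_I\cdot(\mathcal{G}^0\circ1_M)=1_M\circ\mathcal{F}^0$, and morphisms $f$ with $(f\circ1)\cdot\tilde\sigma_X=\tilde\tau_X\cdot(1\circ f)$. The superscript $s$ denotes the full subcategories where the half-braidings $\sigma$ (resp. $\tilde\sigma$) are invertible. *)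

Set Implicit Arguments.
Unset Strict Implicit.

(* comp g f = g o f.                                                    *)
Record MonCat := {
  ob :> Type;
  hom : ob -> ob -> Type;
  comp : forall {a b c : ob}, hom b c -> hom a b -> hom a c;
  idm : forall a : ob, hom a a;
  comp_assoc : forall a b c d (h : hom c d) (g : hom b c) (f : hom a b),
      comp h (comp g f) = comp (comp h g) f;
  comp_id_l : forall a b (f : hom a b), comp (idm b) f = f;
  comp_id_r : forall a b (f : hom a b), comp f (idm a) = f;
  tens : ob -> ob -> ob;
  tensm : forall {a a' b b' : ob}, hom a a' -> hom b b' -> hom (tens a b) (tens a' b');
  tensm_id : forall a b, tensm (idm a) (idm b) = idm (tens a b);
  tensm_comp : forall a a' a'' b b' b'' (g : hom a' a'') (f : hom a a')
      (g' : hom b' b'') (f' : hom b b'),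
      tensm (comp g f) (comp g' f') = comp (tensm g g') (tensm f f');
  munit : ob;
  massoc : forall a b c, hom (tens (tens a b) c) (tens a (tens b c));
  massoc_inv : forall a b c, hom (tens a (tens b c)) (tens (tens a b) c);
  massoc_iso1 : forall a b c, comp (massoc_inv a b c) (massoc a b c) = idm _;
  massoc_iso2 : forall a b c, comp (massoc a b c) (massoc_inv a b c) = idm _;
  massoc_nat : forall a a' b b' c c' (f : hom a a') (g : hom b b') (h : hom c c'),
      comp (massoc a' b' c') (tensm (tensm f g) h)
      = comp (tensm f (tensm g h)) (massoc a b c);
  mlun : forall a, hom (tens munit a) a;
  mlun_inv : forall a, hom a (tens munit a);
  mlun_iso1 : forall a, comp (mlun_inv a) (mlun a) = idm _;
  mlun_iso2 : forall a, comp (mlun a) (mlun_inv a) = idm _;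
  mlun_nat : forall a a' (f : hom a a'),
      comp (mlun a') (tensm (idm munit) f) = comp f (mlun a);
  mrun : forall a, hom (tens a munit) a;
  mrun_inv : forall a, hom a (tens a munit);
  mrun_iso1 : forall a, comp (mrun_inv a) (mrun a) = idm _;
  mrun_iso2 : forall a, comp (mrun a) (mrun_inv a) = idm _;
  mrun_nat : forall a a' (f : hom a a'),
      comp (mrun a') (tensm f (idm munit)) = comp f (mrun a);
  mpentagon : forall a b c d,
      comp (massoc a b (tens c d)) (massoc (tens a b) c d)
      = comp (tensm (idm a) (massoc b c d))
             (comp (massoc a (tens b c) d) (tensm (massoc a b c) (idm d)));
  mtriangle : forall a b,
      comp (tensm (idm a) (mlun b)) (massoc a munit b) = tensm (mrun a) (idm b)
}.

Arguments munit {m}.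

(* Bicategories.  vcomp b a = b . a (vertical), hcomp1 g f = g o f,    *)
(* hcomp2 b a = b o a (horizontal composition of 2-cells).             *)
Record Bicat := {
  obK :> Type;
  c1 : obK -> obK -> Type;
  c2 : forall {a b : obK}, c1 a b -> c1 a b -> Type;
  vcomp : forall {a b} {f g h : c1 a b}, c2 g h -> c2 f g -> c2 f h;
  id2 : forall {a b} (f : c1 a b), c2 f f;
  vcomp_assoc : forall a b (f g h k : c1 a b) (z : c2 h k) (y : c2 g h) (x : c2 f g),
      vcomp z (vcomp y x) = vcomp (vcomp z y) x;
  vcomp_id_l : forall a b (f g : c1 a b) (x : c2 f g), vcomp (id2 g) x = x;
  vcomp_id_r : forall a b (f g : c1 a b) (x : c2 f g), vcomp x (id2 f) = x;
  id1 : forall a : obK, c1 a a;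
  hcomp1 : forall {a b c : obK}, c1 b c -> c1 a b -> c1 a c;
  hcomp2 : forall {a b c} {g g' : c1 b c} {f f' : c1 a b},
      c2 g g' -> c2 f f' -> c2 (hcomp1 g f) (hcomp1 g' f');
  hcomp2_id : forall a b c (g : c1 b c) (f : c1 a b),
      hcomp2 (id2 g) (id2 f) = id2 (hcomp1 g f);
  interchange : forall a b c (g g' g'' : c1 b c) (f f' f'' : c1 a b)
      (y' : c2 g' g'') (y : c2 g g') (x' : c2 f' f'') (x : c2 f f'),
      hcomp2 (vcomp y' y) (vcomp x' x) = vcomp (hcomp2 y' x') (hcomp2 y x);
  assoc2 : forall {a b c d} (h : c1 c d) (g : c1 b c) (f : c1 a b),
      c2 (hcomp1 (hcomp1 h g) f) (hcomp1 h (hcomp1 g f));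
  assoc2_inv : forall {a b c d} (h : c1 c d) (g : c1 b c) (f : c1 a b),
      c2 (hcomp1 h (hcomp1 g f)) (hcomp1 (hcomp1 h g) f);
  assoc2_iso1 : forall a b c d (h : c1 c d) (g : c1 b c) (f : c1 a b),
      vcomp (assoc2_inv h g f) (assoc2 h g f) = id2 _;
  assoc2_iso2 : forall a b c d (h : c1 c d) (g : c1 b c) (f : c1 a b),
      vcomp (assoc2 h g f) (assoc2_inv h g f) = id2 _;
  assoc2_nat : forall a b c d (h h' : c1 c d) (g g' : c1 b c) (f f' : c1 a b)
      (z : c2 h h') (y : c2 g g') (x : c2 f f'),
      vcomp (assoc2 h' g' f') (hcomp2 (hcomp2 z y) x)
      = vcomp (hcomp2 z (hcomp2 y x)) (assoc2 h g f);
  lun2 : forall {a b} (f : c1 a b), c2 (hcomp1 (id1 b) f) f;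
  lun2_inv : forall {a b} (f : c1 a b), c2 f (hcomp1 (id1 b) f);
  lun2_iso1 : forall a b (f : c1 a b), vcomp (lun2_inv f) (lun2 f) = id2 _;
  lun2_iso2 : forall a b (f : c1 a b), vcomp (lun2 f) (lun2_inv f) = id2 _;
  lun2_nat : forall a b (f f' : c1 a b) (x : c2 f f'),
      vcomp (lun2 f') (hcomp2 (id2 (id1 b)) x) = vcomp x (lun2 f);
  run2 : forall {a b} (f : c1 a b), c2 (hcomp1 f (id1 a)) f;
  run2_inv : forall {a b} (f : c1 a b), c2 f (hcomp1 f (id1 a));
  run2_iso1 : forall a b (f : c1 a b), vcomp (run2_inv f) (run2 f) = id2 _;
  run2_iso2 : forall a b (f : c1 a b), vcomp (run2 f) (run2_inv f) = id2 _;
  run2_nat : forall a b (f f' : c1 a b) (x : c2 f f'),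
      vcomp (run2 f') (hcomp2 x (id2 (id1 a))) = vcomp x (run2 f);
  pentagon2 : forall a b c d e (k : c1 d e) (h : c1 c d) (g : c1 b c) (f : c1 a b),
      vcomp (assoc2 k h (hcomp1 g f)) (assoc2 (hcomp1 k h) g f)
      = vcomp (hcomp2 (id2 k) (assoc2 h g f))
              (vcomp (assoc2 k (hcomp1 h g) f) (hcomp2 (assoc2 k h g) (id2 f)));
  triangle2 : forall a b c (g : c1 b c) (f : c1 a b),
      vcomp (hcomp2 (id2 g) (lun2 f)) (assoc2 g (id1 b) f) = hcomp2 (run2 g) (id2 f)
}.

(* A 2-category = a bicategory whose composition of 1-cells is strictly
   associative and unital, with associator and unitors the identity 2-cells
   (transported along these equalities of 1-cells). *)
Definition idtoiso2 {K : Bicat} {a b : K} {f g : c1 a b} (e : f = g) : c2 f g :=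
  match e in _ = g' return c2 f g' with eq_refl => id2 f end.

Definition is_strict2 (K : Bicat) : Prop :=
  exists (ea : forall (a b c d : K) (h : c1 c d) (g : c1 b c) (f : c1 a b),
                 hcomp1 (hcomp1 h g) f = hcomp1 h (hcomp1 g f))
         (el : forall (a b : K) (f : c1 a b), hcomp1 (id1 b) f = f)
         (er : forall (a b : K) (f : c1 a b), hcomp1 f (id1 a) = f),
    (forall a b c d (h : c1 c d) (g : c1 b c) (f : c1 a b),
        assoc2 h g f = idtoiso2 (ea a b c d h g f)) /\
    (forall a b (f : c1 a b), lun2 f = idtoiso2 (el a b f)) /\
    (forall a b (f : c1 a b), run2 f = idtoiso2 (er a b f)).

Definition inverse2 {K : Bicat} {a b : K} {f g : c1 a b} (x : c2 f g) (y : c2 g f) : Prop :=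
  vcomp y x = id2 f /\ vcomp x y = id2 g.
Definition iso2 {K : Bicat} {a b : K} {f g : c1 a b} (x : c2 f g) : Prop :=
  exists y : c2 g f, inverse2 x y.

Definition is_adjunction {K : Bicat} {a b : K} (l : c1 a b) (r : c1 b a)
    (eta : c2 (id1 a) (hcomp1 r l)) (eps : c2 (hcomp1 l r) (id1 b)) : Prop :=
  vcomp (lun2 l) (vcomp (hcomp2 eps (id2 l)) (vcomp (assoc2_inv l r l)
     (vcomp (hcomp2 (id2 l) eta) (run2_inv l)))) = id2 l /\
  vcomp (run2 r) (vcomp (hcomp2 (id2 r) eps) (vcomp (assoc2 r l r)
     (vcomp (hcomp2 eta (id2 r)) (lun2_inv r)))) = id2 r.

Arguments is_adjunction {K a b} l r eta eps.

Definition autonomous_bicat (K : Bicat) : Prop :=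
  forall (a b : K) (f : c1 a b),
    (exists (r : c1 b a) eta eps, is_adjunction f r eta eps) /\
    (exists (l : c1 b a) eta eps, is_adjunction l f eta eps).

(* duality in a monoidal category = adjunction in its delooping Del(E),
   whose 1-cell composition is Y o X := Y (x) X *)
Definition is_duality {E : MonCat} (l r : E)
    (eta : hom munit (tens r l)) (eps : hom (tens l r) munit) : Prop :=
  comp (mlun l) (comp (tensm eps (idm l)) (comp (massoc_inv l r l)
     (comp (tensm (idm l) eta) (mrun_inv l)))) = idm l /\
  comp (mrun r) (comp (tensm (idm r) eps) (comp (massoc r l r)
     (comp (tensm eta (idm r)) (mlun_inv r)))) = idm r.

Arguments is_duality {E} l r eta eps.

Definition autonomous_moncat (E : MonCat) : Prop :=
  forall X : E,
    (exists (r : E) eta eps, is_duality X r eta eps) /\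
    (exists (l : E) eta eps, is_duality l X eta eps).

(* Pseudofunctors Del(E) -> K.  Fob = F( * ), Fm X = F(X),             *)
Record PseudoFun (E : MonCat) (K : Bicat) := {
  Fob : K;
  Fm : E -> c1 Fob Fob;
  Ff : forall {X Y : E}, hom X Y -> c2 (Fm X) (Fm Y);
  Ff_id : forall X, Ff (idm X) = id2 (Fm X);
  Ff_comp : forall X Y Z (g : hom Y Z) (f : hom X Y), Ff (comp g f) = vcomp (Ff g) (Ff f);
  F2 : forall Y X : E, c2 (hcomp1 (Fm Y) (Fm X)) (Fm (tens Y X));
  F2_nat : forall Y Y' X X' (g : hom Y Y') (f : hom X X'),
      vcomp (Ff (tensm g f)) (F2 Y X) = vcomp (F2 Y' X') (hcomp2 (Ff g) (Ff f));
  F0 : c2 (id1 Fob) (Fm munit);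
  F2_iso : forall Y X, iso2 (F2 Y X);
  F0_iso : iso2 F0;
  F_assoc : forall Z Y X,
      vcomp (Ff (massoc Z Y X)) (vcomp (F2 (tens Z Y) X) (hcomp2 (F2 Z Y) (id2 (Fm X))))
      = vcomp (F2 Z (tens Y X)) (vcomp (hcomp2 (id2 (Fm Z)) (F2 Y X))
                                      (assoc2 (Fm Z) (Fm Y) (Fm X)));
  F_lunit : forall X,
      vcomp (Ff (mlun X)) (vcomp (F2 munit X) (hcomp2 F0 (id2 (Fm X)))) = lun2 (Fm X);
  F_runit : forall X,
      vcomp (Ff (mrun X)) (vcomp (F2 X munit) (hcomp2 (id2 (Fm X)) F0)) = run2 (Fm X)
}.

Arguments Fob {E K}. Arguments Fm {E K}. Arguments Ff {E K} p {X Y}.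
Arguments F2 {E K}. Arguments F0 {E K}.

Section Centers.
Context {E : MonCat} {K : Bicat} (F G : PseudoFun E K).

(* Objects of Z^{w-ps}_l(F,K,G): (M, sigma), sigma_X : M o F(X) => G(X) o M
   (colax natural transformations F => G); associators of K are made
   explicit (they are identities when K is a 2-category). *)
Definition left_halfbraiding (M : c1 (Fob F) (Fob G))
    (s : forall X : E, c2 (hcomp1 M (Fm F X)) (hcomp1 (Fm G X) M)) : Prop :=
  (forall X Y (f : hom X Y),
      vcomp (hcomp2 (Ff G f) (id2 M)) (s X) = vcomp (s Y) (hcomp2 (id2 M) (Ff F f))) /\
  (forall Y X,
      vcomp (hcomp2 (F2 G Y X) (id2 M)) (vcomp (assoc2_inv (Fm G Y) (Fm G X) M)
        (vcomp (hcomp2 (id2 (Fm G Y)) (s X)) (vcomp (assoc2 (Fm G Y) M (Fm F X))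
          (hcomp2 (s Y) (id2 (Fm F X))))))
      = vcomp (s (tens Y X)) (vcomp (hcomp2 (id2 M) (F2 F Y X)) (assoc2 M (Fm F Y) (Fm F X)))) /\
  vcomp (s munit) (vcomp (hcomp2 (id2 M) (F0 F)) (run2_inv M))
    = vcomp (hcomp2 (F0 G) (id2 M)) (lun2_inv M).

Definition left_hom (M N : c1 (Fob F) (Fob G))
    (s : forall X : E, c2 (hcomp1 M (Fm F X)) (hcomp1 (Fm G X) M))
    (t : forall X : E, c2 (hcomp1 N (Fm F X)) (hcomp1 (Fm G X) N))
    (f : c2 M N) : Prop :=
  forall X, vcomp (hcomp2 (id2 (Fm G X)) f) (s X) = vcomp (t X) (hcomp2 f (id2 (Fm F X))).

(* Objects of Z^{w-ps}_r(F,K,G): (M, st), st_X : G(X) o M => M o F(X)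
   (lax natural transformations). *)
Definition right_halfbraiding (M : c1 (Fob F) (Fob G))
    (s : forall X : E, c2 (hcomp1 (Fm G X) M) (hcomp1 M (Fm F X))) : Prop :=
  (forall X Y (f : hom X Y),
      vcomp (hcomp2 (id2 M) (Ff F f)) (s X) = vcomp (s Y) (hcomp2 (Ff G f) (id2 M))) /\
  (forall Y X,
      vcomp (s (tens Y X)) (vcomp (hcomp2 (F2 G Y X) (id2 M)) (assoc2_inv (Fm G Y) (Fm G X) M))
      = vcomp (hcomp2 (id2 M) (F2 F Y X)) (vcomp (assoc2 M (Fm F Y) (Fm F X))
          (vcomp (hcomp2 (s Y) (id2 (Fm F X))) (vcomp (assoc2_inv (Fm G Y) M (Fm F X))
            (hcomp2 (id2 (Fm G Y)) (s X)))))) /\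
  vcomp (s munit) (vcomp (hcomp2 (F0 G) (id2 M)) (lun2_inv M))
    = vcomp (hcomp2 (id2 M) (F0 F)) (run2_inv M).

Definition right_hom (M N : c1 (Fob F) (Fob G))
    (s : forall X : E, c2 (hcomp1 (Fm G X) M) (hcomp1 M (Fm F X)))
    (t : forall X : E, c2 (hcomp1 (Fm G X) N) (hcomp1 N (Fm F X)))
    (f : c2 M N) : Prop :=
  forall X, vcomp (hcomp2 f (id2 (Fm F X))) (s X) = vcomp (t X) (hcomp2 (id2 (Fm G X)) f).

End Centers.

Arguments left_halfbraiding {E K} F G M s.
Arguments right_halfbraiding {E K} F G M s.
Arguments left_hom {E K} F G M N s t f.
Arguments right_hom {E K} F G M N s t f.

(* A pseudofunctor carries a duality l -| r of E to an adjunction F(l) -| F(r) whose unit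
   and counit are built from F(eta), F(eps) and the inverses of F2 and F0.  The tensor and
   unit axioms of a left half-braiding sigma say that sigma_X and sigma_r are compatible
   with the units and counits of F(X) -| F(r) and G(X) -| G(r); for such a pair the mate
   of sigma_r is a two-sided inverse of sigma_X.  Right half-braidings are treated in the
   mirror-image way, using left duals.  Inverting a family of invertible 2-cells turns
   each axiom of a left half-braiding, and the morphism condition, into its right-handed
   counterpart. *)

From Stdlib Require Import Eqdep.

Notation "y ** x" := (vcomp y x) (at level 41, right associativity).
Notation "y ## x" := (hcomp2 y x) (at level 36, left associativity).

Lemma vcomp_prefix2 {K : Bicat} {a b : K} {g h k : c1 a b}
    {x : c2 h k} {y : c2 g h} {z : c2 g k} :
  x ** y = z -> forall {f} (r : c2 f g), x ** (y ** r) = z ** r.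
Proof. intros H f r. rewrite vcomp_assoc, H. reflexivity. Qed.

Lemma vcomp_prefix3 {K : Bicat} {a b : K} {g h i k : c1 a b}
    {x : c2 i k} {y : c2 h i} {w : c2 g h} {z : c2 g k} :
  x ** (y ** w) = z -> forall {f} (r : c2 f g), x ** (y ** (w ** r)) = z ** r.
Proof. intros H f r. rewrite (vcomp_assoc y w r). exact (vcomp_prefix2 H r). Qed.

Lemma vcomp_prefix4 {K : Bicat} {a b : K} {g h i j k : c1 a b}
    {x : c2 j k} {y : c2 i j} {w : c2 h i} {v : c2 g h} {z : c2 g k} :
  x ** (y ** (w ** v)) = z -> forall {f} (r : c2 f g), x ** (y ** (w ** (v ** r))) = z ** r.
Proof. intros H f r. rewrite (vcomp_assoc w v r). exact (vcomp_prefix3 H r). Qed.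

(* [vnorm] right-associates vertical composites and drops identities; [vrewrite H] then
   rewrites with [H] wherever its right-nested left-hand side occurs as a contiguous
   segment of such a composite, not only as a suffix. *)
Ltac vnorm := repeat (rewrite <- vcomp_assoc || rewrite vcomp_id_l
                      || rewrite vcomp_id_r || rewrite hcomp2_id).
Ltac vnorm_in H := repeat (rewrite <- vcomp_assoc in H || rewrite vcomp_id_l in H
                           || rewrite vcomp_id_r in H || rewrite hcomp2_id in H).
Ltac vrewrite H :=
  first [ rewrite (vcomp_prefix4 H) | rewrite (vcomp_prefix3 H) | rewrite (vcomp_prefix2 H)
        | rewrite H ]; vnorm.
Ltac vcancel H := first [ vrewrite (proj1 H) | vrewrite (proj2 H) ].

Section Bicategory.
Context {K : Bicat}.

Lemma whisker_r_vcomp {a b c : K} {g g' g'' : c1 b c} (y' : c2 g' g'') (y : c2 g g')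
    (f : c1 a b) :
  (y' ** y) ## id2 f = (y' ## id2 f) ** (y ## id2 f).
Proof. rewrite <- interchange, vcomp_id_l. reflexivity. Qed.

Lemma whisker_l_vcomp {a b c : K} (g : c1 b c) {f f' f'' : c1 a b} (x' : c2 f' f'')
    (x : c2 f f') :
  id2 g ## (x' ** x) = (id2 g ## x') ** (id2 g ## x).
Proof. rewrite <- interchange, vcomp_id_l. reflexivity. Qed.

Lemma whisker_exchange {a b c : K} {g g' : c1 b c} {f f' : c1 a b} (y : c2 g g')
    (x : c2 f f') :
  (id2 g' ## x) ** (y ## id2 f) = (y ## id2 f') ** (id2 g ## x).
Proof. rewrite <- !interchange, !vcomp_id_l, !vcomp_id_r. reflexivity. Qed.

Lemma inverse2_sym {a b : K} {f g : c1 a b} (x : c2 f g) (y : c2 g f) :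
  inverse2 x y -> inverse2 y x.
Proof. intros [H1 H2]; split; assumption. Qed.

Lemma inverse2_vcomp {a b : K} {f g h : c1 a b} (x : c2 f g) x' (y : c2 g h) y' :
  inverse2 x x' -> inverse2 y y' -> inverse2 (y ** x) (x' ** y').
Proof.
  intros [H1 H2] [H3 H4]; split; vnorm.
  - vrewrite H3. exact H1.
  - vrewrite H2. exact H4.
Qed.

Lemma inverse2_whisker_r {a b c : K} {g g' : c1 b c} (y : c2 g g') y' (f : c1 a b) :
  inverse2 y y' -> inverse2 (y ## id2 f) (y' ## id2 f).
Proof.
  intros [H1 H2]; split; rewrite <- whisker_r_vcomp; [rewrite H1 | rewrite H2];
    apply hcomp2_id.
Qed.

Lemma inverse2_whisker_l {a b c : K} (g : c1 b c) {f f' : c1 a b} (x : c2 f f') x' :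
  inverse2 x x' -> inverse2 (id2 g ## x) (id2 g ## x').
Proof.
  intros [H1 H2]; split; rewrite <- whisker_l_vcomp; [rewrite H1 | rewrite H2];
    apply hcomp2_id.
Qed.

Lemma inverse2_assoc2 {a b c d : K} (h : c1 c d) (g : c1 b c) (f : c1 a b) :
  inverse2 (assoc2 h g f) (assoc2_inv h g f).
Proof. split; [apply assoc2_iso1 | apply assoc2_iso2]. Qed.

Lemma inverse2_lun2 {a b : K} (f : c1 a b) : inverse2 (lun2 f) (lun2_inv f).
Proof. split; [apply lun2_iso1 | apply lun2_iso2]. Qed.

Lemma inverse2_run2 {a b : K} (f : c1 a b) : inverse2 (run2 f) (run2_inv f).
Proof. split; [apply run2_iso1 | apply run2_iso2]. Qed.

Lemma inverse2_cancel_l {a b : K} {f g h : c1 a b} (x : c2 g h) (y : c2 h g)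
    (z1 z2 : c2 f g) :
  inverse2 x y -> x ** z1 = x ** z2 -> z1 = z2.
Proof.
  intros [H1 _] H.
  rewrite <- (vcomp_id_l z1), <- (vcomp_id_l z2), <- H1, <- !vcomp_assoc, H.
  reflexivity.
Qed.

Lemma inverse2_square {a b : K} {f g h k : c1 a b} (p : c2 f g) (p' : c2 g f)
    (q : c2 h k) (q' : c2 k h) (u : c2 g k) (v : c2 f h) :
  inverse2 p p' -> inverse2 q q' -> u ** p = q ** v -> q' ** u = v ** p'.
Proof.
  intros [Hp1 Hp2] [Hq1 Hq2] H.
  rewrite <- (vcomp_id_r (q' ** u)), <- Hp2.
  rewrite <- !vcomp_assoc, (vcomp_assoc u p p'), H, !vcomp_assoc, Hq1, vcomp_id_l.
  reflexivity.
Qed.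

Lemma assoc2_inv_nat {a b c d : K} (h h' : c1 c d) (g g' : c1 b c) (f f' : c1 a b)
    (z : c2 h h') (y : c2 g g') (x : c2 f f') :
  assoc2_inv h' g' f' ** (z ## (y ## x)) = ((z ## y) ## x) ** assoc2_inv h g f.
Proof.
  apply (inverse2_square _ _ _ _ _ _ (inverse2_assoc2 h g f) (inverse2_assoc2 h' g' f')).
  symmetry. apply assoc2_nat.
Qed.

Lemma lun2_inv_nat {a b : K} (f f' : c1 a b) (x : c2 f f') :
  lun2_inv f' ** x = (id2 (id1 b) ## x) ** lun2_inv f.
Proof.
  apply (inverse2_square _ _ _ _ _ _ (inverse2_lun2 f) (inverse2_lun2 f')).
  symmetry. apply lun2_nat.
Qed.

Lemma run2_inv_nat {a b : K} (f f' : c1 a b) (x : c2 f f') :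
  run2_inv f' ** x = (x ## id2 (id1 a)) ** run2_inv f.
Proof.
  apply (inverse2_square _ _ _ _ _ _ (inverse2_run2 f) (inverse2_run2 f')).
  symmetry. apply run2_nat.
Qed.

Lemma assoc2_nat_l {a b c d : K} (h h' : c1 c d) (g : c1 b c) (f : c1 a b) (z : c2 h h') :
  assoc2 h' g f ** ((z ## id2 g) ## id2 f) = (z ## id2 (hcomp1 g f)) ** assoc2 h g f.
Proof. rewrite assoc2_nat, hcomp2_id. reflexivity. Qed.

Lemma assoc2_nat_m {a b c d : K} (h : c1 c d) (g g' : c1 b c) (f : c1 a b) (y : c2 g g') :
  assoc2 h g' f ** ((id2 h ## y) ## id2 f) = (id2 h ## (y ## id2 f)) ** assoc2 h g f.
Proof. apply assoc2_nat. Qed.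

Lemma assoc2_nat_r {a b c d : K} (h : c1 c d) (g : c1 b c) (f f' : c1 a b) (x : c2 f f') :
  assoc2 h g f' ** (id2 (hcomp1 h g) ## x) = (id2 h ## (id2 g ## x)) ** assoc2 h g f.
Proof. rewrite <- assoc2_nat, hcomp2_id. reflexivity. Qed.

Lemma assoc2_inv_nat_l {a b c d : K} (h h' : c1 c d) (g : c1 b c) (f : c1 a b)
    (z : c2 h h') :
  assoc2_inv h' g f ** (z ## id2 (hcomp1 g f)) = ((z ## id2 g) ## id2 f) ** assoc2_inv h g f.
Proof. rewrite <- assoc2_inv_nat, hcomp2_id. reflexivity. Qed.

Lemma assoc2_inv_nat_m {a b c d : K} (h : c1 c d) (g g' : c1 b c) (f : c1 a b)
    (y : c2 g g') :
  assoc2_inv h g' f ** (id2 h ## (y ## id2 f)) = ((id2 h ## y) ## id2 f) ** assoc2_inv h g f.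
Proof. apply assoc2_inv_nat. Qed.

Lemma assoc2_inv_nat_r {a b c d : K} (h : c1 c d) (g : c1 b c) (f f' : c1 a b)
    (x : c2 f f') :
  assoc2_inv h g f' ** (id2 h ## (id2 g ## x)) = (id2 (hcomp1 h g) ## x) ** assoc2_inv h g f.
Proof. rewrite assoc2_inv_nat, hcomp2_id. reflexivity. Qed.

End Bicategory.

Section Strict.
Context {K : Bicat}.

Lemma idtoiso2_vcomp {a b : K} {f g h : c1 a b} (e1 : f = g) (e2 : g = h) :
  idtoiso2 e2 ** idtoiso2 e1 = idtoiso2 (eq_trans e1 e2).
Proof. destruct e2. apply vcomp_id_l. Qed.

Lemma idtoiso2_hcomp {a b c : K} {g g' : c1 b c} {f f' : c1 a b} (e1 : g = g') (e2 : f = f') :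
  idtoiso2 e1 ## idtoiso2 e2 = idtoiso2 (f_equal2 (@hcomp1 K a b c) e1 e2).
Proof. destruct e1, e2. rewrite (UIP_refl _ _ (f_equal2 _ _ _)). apply hcomp2_id. Qed.

Lemma idtoiso2_irrelevant {a b : K} {f g : c1 a b} (e1 e2 : f = g) :
  idtoiso2 e1 = idtoiso2 e2.
Proof. rewrite (UIP _ _ _ e1 e2). reflexivity. Qed.

Lemma idtoiso2_inv_l {a b : K} {f g : c1 a b} (x : c2 f g) (y : c2 g f) (e : f = g) :
  y ** x = id2 f -> x = idtoiso2 e -> y = idtoiso2 (eq_sym e).
Proof.
  intros Hyx Hx. rewrite <- (vcomp_id_r y).
  replace (id2 g) with (x ** idtoiso2 (eq_sym e)).
  - rewrite vcomp_assoc, Hyx, vcomp_id_l. reflexivity.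
  - rewrite Hx, idtoiso2_vcomp. destruct e. reflexivity.
Qed.

Hypothesis HK : is_strict2 K.

(* In a 2-category every composite of associators, unitors and identities is the
   transport along an equality of 1-cells, so by UIP two such composites with the
   same boundary are equal. *)
Ltac coherence :=
  let ea := fresh "ea" in let el := fresh "el" in let er := fresh "er" in
  let HA := fresh "HA" in let HL := fresh "HL" in let HR := fresh "HR" in
  destruct HK as (ea & el & er & HA & HL & HR);
  rewrite ?HA, ?HL, ?HR;
  repeat match goal with
  | |- context [assoc2_inv ?h ?g ?f] =>
      rewrite (idtoiso2_inv_l _ _ _ (assoc2_iso1 h g f) (HA _ _ _ _ h g f))
  | |- context [lun2_inv ?f] =>
      rewrite (idtoiso2_inv_l _ _ _ (lun2_iso1 f) (HL _ _ f))
  | |- context [run2_inv ?f] =>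
      rewrite (idtoiso2_inv_l _ _ _ (run2_iso1 f) (HR _ _ f))
  end;
  repeat match goal with |- context [id2 ?f] => change (id2 f) with (idtoiso2 (eq_refl f)) end;
  repeat (rewrite idtoiso2_vcomp || rewrite idtoiso2_hcomp);
  apply idtoiso2_irrelevant.

Ltac vrewrite_coherent eqn :=
  let H := fresh in assert (H : eqn) by coherence; vrewrite H; clear H.

Section Left_mate.
Context {a a' b b' : K} (M : c1 a b) (N : c1 a' b')
  (u : c1 a' a) (u' : c1 a a') (v : c1 b' b) (v' : c1 b b')
  (eta_u : c2 (id1 a') (hcomp1 u' u)) (eps_u : c2 (hcomp1 u u') (id1 a))
  (eta_v : c2 (id1 b') (hcomp1 v' v)) (eps_v : c2 (hcomp1 v v') (id1 b))
  (sigma : c2 (hcomp1 M u) (hcomp1 v N)) (rho : c2 (hcomp1 N u') (hcomp1 v' M)).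

Definition left_mate : c2 (hcomp1 v N) (hcomp1 M u) :=
  ((lun2 M ** (eps_v ## id2 M) ** assoc2_inv v v' M ** (id2 v ## rho) ** assoc2 v N u')
     ## id2 u)
  ** assoc2_inv (hcomp1 v N) u' u ** (id2 (hcomp1 v N) ## eta_u) ** run2_inv (hcomp1 v N).

Lemma left_mate_vcomp :
  is_adjunction u u' eta_u eps_u ->
  lun2 M ** (eps_v ## id2 M) ** assoc2_inv v v' M ** (id2 v ## rho) ** assoc2 v N u'
    ** (sigma ## id2 u') = run2 M ** (id2 M ## eps_u) ** assoc2 M u u' ->
  left_mate ** sigma = id2 (hcomp1 M u).
Proof.
  intros [zigzag_u _] Hcounit.
  unfold left_mate. vnorm.
  vrewrite (run2_inv_nat _ _ sigma). vrewrite (whisker_exchange sigma eta_u).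
  vrewrite (assoc2_inv_nat_l _ _ u' u sigma).
  rewrite (vcomp_prefix2 (eq_sym (whisker_r_vcomp _ (sigma ## id2 u') u))). vnorm.
  rewrite Hcounit, !whisker_r_vcomp. vnorm.
  rewrite <- triangle2. vnorm.
  vrewrite (assoc2_nat_m M _ _ u eps_u).
  vrewrite_coherent (assoc2 M (hcomp1 u u') u ** (assoc2 M u u' ## id2 u)
                       ** assoc2_inv (hcomp1 M u) u' u
                     = (id2 M ## assoc2_inv u u' u) ** assoc2 M u (hcomp1 u' u)).
  vrewrite (assoc2_nat_r M u _ _ eta_u).
  vrewrite_coherent (assoc2 M u (id1 a') ** run2_inv (hcomp1 M u) = id2 M ## run2_inv u).
  repeat rewrite <- whisker_l_vcomp. rewrite zigzag_u. apply hcomp2_id.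
Qed.

Lemma vcomp_left_mate :
  is_adjunction v v' eta_v eps_v ->
  assoc2_inv v' v N ** (id2 v' ## sigma) ** assoc2 v' M u ** (rho ## id2 u)
    ** assoc2_inv N u' u ** (id2 N ## eta_u) ** run2_inv N
    = (eta_v ## id2 N) ** lun2_inv N ->
  sigma ** left_mate = id2 (hcomp1 v N).
Proof.
  intros [zigzag_v _] Hunit.
  assert (Hunit' : (id2 v' ## sigma) ** assoc2 v' M u ** (rho ## id2 u) ** assoc2_inv N u' u
                   ** (id2 N ## eta_u) ** run2_inv N
                 = assoc2 v' v N ** (eta_v ## id2 N) ** lun2_inv N).
  { rewrite <- Hunit. vnorm. vrewrite (assoc2_iso2 v' v N). reflexivity. }
  unfold left_mate. repeat rewrite whisker_r_vcomp. vnorm.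
  vrewrite_coherent (run2_inv (hcomp1 v N) = assoc2_inv v N (id1 a') ** (id2 v ## run2_inv N)).
  vrewrite (eq_sym (assoc2_inv_nat_r v N _ _ eta_u)).
  vrewrite_coherent ((assoc2 v N u' ## id2 u) ** assoc2_inv (hcomp1 v N) u' u
                       ** assoc2_inv v N (hcomp1 u' u)
                     = assoc2_inv v (hcomp1 N u') u ** (id2 v ## assoc2_inv N u' u)).
  vrewrite (eq_sym (assoc2_inv_nat_m v _ _ u rho)).
  vrewrite_coherent ((assoc2_inv v v' M ## id2 u) ** assoc2_inv v (hcomp1 v' M) u
                     = assoc2_inv (hcomp1 v v') M u ** assoc2_inv v v' (hcomp1 M u)
                       ** (id2 v ## assoc2 v' M u)).
  vrewrite (eq_sym (assoc2_inv_nat_l _ _ M u eps_v)).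
  vrewrite_coherent ((lun2 M ## id2 u) ** assoc2_inv (id1 b) M u = lun2 (hcomp1 M u)).
  vrewrite (eq_sym (lun2_nat sigma)). vrewrite (whisker_exchange eps_v sigma).
  vrewrite (eq_sym (assoc2_inv_nat_r v v' _ _ sigma)).
  repeat rewrite <- whisker_l_vcomp. rewrite Hunit'. repeat rewrite whisker_l_vcomp.
  vrewrite_coherent (lun2 (hcomp1 v N) = (lun2 v ## id2 N) ** assoc2_inv (id1 b) v N).
  vrewrite (assoc2_inv_nat_l _ _ v N eps_v).
  vrewrite_coherent (assoc2_inv (hcomp1 v v') v N ** assoc2_inv v v' (hcomp1 v N)
                       ** (id2 v ## assoc2 v' v N)
                     = (assoc2_inv v v' v ## id2 N) ** assoc2_inv v (hcomp1 v' v) N).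
  vrewrite (assoc2_inv_nat_m v _ _ N eta_v).
  vrewrite_coherent (assoc2_inv v (id1 b') N ** (id2 v ## lun2_inv N) = run2_inv v ## id2 N).
  repeat rewrite <- whisker_r_vcomp. rewrite zigzag_v. apply hcomp2_id.
Qed.

End Left_mate.

Section Right_mate.
Context {a a' b b' : K} (M : c1 a b) (N : c1 a' b')
  (u : c1 a' a) (u' : c1 a a') (v : c1 b' b) (v' : c1 b b')
  (eta_u : c2 (id1 a) (hcomp1 u u')) (eps_u : c2 (hcomp1 u' u) (id1 a'))
  (eta_v : c2 (id1 b) (hcomp1 v v')) (eps_v : c2 (hcomp1 v' v) (id1 b'))
  (sigma : c2 (hcomp1 v N) (hcomp1 M u)) (rho : c2 (hcomp1 v' M) (hcomp1 N u')).

Definition right_mate : c2 (hcomp1 M u) (hcomp1 v N) :=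
  (id2 v ## (run2 N ** (id2 N ## eps_u) ** assoc2 N u' u ** (rho ## id2 u)
               ** assoc2_inv v' M u))
  ** assoc2 v v' (hcomp1 M u) ** (eta_v ## id2 (hcomp1 M u)) ** lun2_inv (hcomp1 M u).

Lemma right_mate_vcomp :
  is_adjunction v' v eta_v eps_v ->
  run2 N ** (id2 N ## eps_u) ** assoc2 N u' u ** (rho ## id2 u) ** assoc2_inv v' M u
    ** (id2 v' ## sigma) = lun2 N ** (eps_v ## id2 N) ** assoc2_inv v' v N ->
  right_mate ** sigma = id2 (hcomp1 v N).
Proof.
  intros [_ zigzag_v] Hcounit.
  unfold right_mate. vnorm.
  vrewrite (lun2_inv_nat _ _ sigma). vrewrite (eq_sym (whisker_exchange eta_v sigma)).
  vrewrite (assoc2_nat_r v v' _ _ sigma).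
  rewrite (vcomp_prefix2 (eq_sym (whisker_l_vcomp v _ (id2 v' ## sigma)))). vnorm.
  rewrite Hcounit, !whisker_l_vcomp. vnorm.
  vrewrite_coherent (id2 v ## lun2 N = (run2 v ## id2 N) ** assoc2_inv v (id1 b') N).
  vrewrite (assoc2_inv_nat_m v _ _ N eps_v).
  vrewrite_coherent (assoc2_inv v (hcomp1 v' v) N ** (id2 v ## assoc2_inv v' v N)
                       ** assoc2 v v' (hcomp1 v N)
                     = (assoc2 v v' v ## id2 N) ** assoc2_inv (hcomp1 v v') v N).
  vrewrite (assoc2_inv_nat_l _ _ v N eta_v).
  vrewrite_coherent (assoc2_inv (id1 b) v N ** lun2_inv (hcomp1 v N) = lun2_inv v ## id2 N).
  repeat rewrite <- whisker_r_vcomp. rewrite zigzag_v. apply hcomp2_id.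
Qed.

Lemma vcomp_right_mate :
  is_adjunction u' u eta_u eps_u ->
  assoc2 M u u' ** (sigma ## id2 u') ** assoc2_inv v N u' ** (id2 v ## rho)
    ** assoc2 v v' M ** (eta_v ## id2 M) ** lun2_inv M = (id2 M ## eta_u) ** run2_inv M ->
  sigma ** right_mate = id2 (hcomp1 M u).
Proof.
  intros [_ zigzag_u] Hunit.
  assert (Hunit' : (sigma ## id2 u') ** assoc2_inv v N u' ** (id2 v ## rho) ** assoc2 v v' M
                   ** (eta_v ## id2 M) ** lun2_inv M
                 = assoc2_inv M u u' ** (id2 M ## eta_u) ** run2_inv M).
  { rewrite <- Hunit. vnorm. vrewrite (assoc2_iso1 M u u'). reflexivity. }
  unfold right_mate. repeat rewrite whisker_l_vcomp. vnorm.
  vrewrite_coherent (lun2_inv (hcomp1 M u) = assoc2 (id1 b) M u ** (lun2_inv M ## id2 u)).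
  vrewrite (eq_sym (assoc2_nat_l _ _ M u eta_v)).
  vrewrite_coherent ((id2 v ## assoc2_inv v' M u) ** assoc2 v v' (hcomp1 M u)
                       ** assoc2 (hcomp1 v v') M u
                     = assoc2 v (hcomp1 v' M) u ** (assoc2 v v' M ## id2 u)).
  vrewrite (eq_sym (assoc2_nat_m v _ _ u rho)).
  vrewrite_coherent ((id2 v ## assoc2 N u' u) ** assoc2 v (hcomp1 N u') u
                     = assoc2 v N (hcomp1 u' u) ** assoc2 (hcomp1 v N) u' u
                       ** (assoc2_inv v N u' ## id2 u)).
  vrewrite (eq_sym (assoc2_nat_r v N _ _ eps_u)).
  vrewrite_coherent ((id2 v ## run2 N) ** assoc2 v N (id1 a') = run2 (hcomp1 v N)).
  vrewrite (eq_sym (run2_nat sigma)). vrewrite (eq_sym (whisker_exchange sigma eps_u)).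
  vrewrite (eq_sym (assoc2_nat_l _ _ u' u sigma)).
  repeat rewrite <- whisker_r_vcomp. rewrite Hunit'. repeat rewrite whisker_r_vcomp.
  vrewrite_coherent (run2 (hcomp1 M u) = (id2 M ## run2 u) ** assoc2 M u (id1 a')).
  vrewrite (assoc2_nat_r M u _ _ eps_u).
  vrewrite_coherent (assoc2 M u (hcomp1 u' u) ** assoc2 (hcomp1 M u) u' u
                       ** (assoc2_inv M u u' ## id2 u)
                     = (id2 M ## assoc2 u u' u) ** assoc2 M (hcomp1 u u') u).
  vrewrite (assoc2_nat_m M _ _ u eta_u).
  vrewrite_coherent (assoc2 M (id1 a) u ** (run2_inv M ## id2 u) = id2 M ## lun2_inv u).
  repeat rewrite <- whisker_l_vcomp. rewrite zigzag_u. apply hcomp2_id.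
Qed.

End Right_mate.
End Strict.

Section Pseudofunctor.
Context {E : MonCat} {K : Bicat} (F : PseudoFun E K).

Lemma Ff_inverse2 {X Y : E} (f : hom X Y) (g : hom Y X) :
  comp g f = idm X -> comp f g = idm Y -> inverse2 (Ff F f) (Ff F g).
Proof.
  intros H1 H2; split; rewrite <- Ff_comp; [rewrite H1 | rewrite H2]; apply Ff_id.
Qed.

Context {l r : E} {eta : hom munit (tens r l)} {eps : hom (tens l r) munit}
  {F2_rl_inv : c2 (Fm F (tens r l)) (hcomp1 (Fm F r) (Fm F l))}
  {F0_inv : c2 (Fm F munit) (id1 (Fob F))}.
Hypotheses (Hduality : is_duality l r eta eps)
  (HF2_rl : inverse2 (F2 F r l) F2_rl_inv) (HF0 : inverse2 (F0 F) F0_inv).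

Lemma pseudofun_zigzag_l :
  lun2 (Fm F l) ** ((F0_inv ** Ff F eps ** F2 F l r) ## id2 (Fm F l))
  ** assoc2_inv (Fm F l) (Fm F r) (Fm F l)
  ** (id2 (Fm F l) ## (F2_rl_inv ** Ff F eta ** F0 F)) ** run2_inv (Fm F l)
  = id2 (Fm F l).
Proof.
  destruct Hduality as [zigzag_l _].
  destruct (F2_iso F (tens l r) l) as [q1 Hq1]. destruct (F2_iso F munit l) as [q2 Hq2].
  assert (Hassoc : (q1 ** Ff F (massoc_inv l r l)) ** F2 F l (tens r l)
     = (F2 F l r ## id2 (Fm F l)) ** (assoc2_inv (Fm F l) (Fm F r) (Fm F l)
                                      ** (id2 (Fm F l) ## F2_rl_inv))).
  { eapply inverse2_square.
    - apply inverse2_sym, inverse2_vcomp;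
        [apply inverse2_whisker_l, inverse2_sym, HF2_rl | apply inverse2_sym, inverse2_assoc2].
    - apply inverse2_sym, inverse2_vcomp;
        [apply Ff_inverse2; [apply massoc_iso2 | apply massoc_iso1] | apply inverse2_sym, Hq1].
    - rewrite <- vcomp_assoc. symmetry. apply F_assoc. }
  vnorm_in Hassoc.
  assert (Hnat_eps : (Ff F eps ## id2 (Fm F l)) ** q1 = q2 ** Ff F (tensm eps (idm l))).
  { symmetry. eapply inverse2_square; [exact Hq1 | exact Hq2 |].
    rewrite F2_nat, Ff_id. reflexivity. }
  assert (Hnat_eta : F2 F l (tens r l) ** (id2 (Fm F l) ## Ff F eta)
                   = Ff F (tensm (idm l) eta) ** F2 F l munit).
  { rewrite F2_nat, Ff_id. reflexivity. }
  assert (Hrunit : F2 F l munit ** (id2 (Fm F l) ## F0 F) ** run2_inv (Fm F l)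
                 = Ff F (mrun_inv l)).
  { apply (inverse2_cancel_l _ _ _ _ (Ff_inverse2 (mrun l) (mrun_inv l)
                                        (mrun_iso1 l) (mrun_iso2 l))).
    vnorm. vrewrite (F_runit F l). rewrite run2_iso2, <- Ff_comp, mrun_iso2.
    symmetry. apply Ff_id. }
  assert (Hlunit : lun2 (Fm F l) ** (F0_inv ## id2 (Fm F l)) ** q2 = Ff F (mlun l)).
  { rewrite <- (F_lunit F l). vnorm.
    vcancel (inverse2_whisker_r _ _ (Fm F l) HF0). vcancel Hq2. reflexivity. }
  repeat rewrite whisker_r_vcomp. repeat rewrite whisker_l_vcomp. vnorm.
  vrewrite (eq_sym Hassoc). vrewrite Hnat_eps. vrewrite Hnat_eta.
  vrewrite Hrunit. vrewrite Hlunit.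
  repeat rewrite <- Ff_comp. rewrite zigzag_l. apply Ff_id.
Qed.

Lemma pseudofun_zigzag_r :
  run2 (Fm F r) ** (id2 (Fm F r) ## (F0_inv ** Ff F eps ** F2 F l r))
  ** assoc2 (Fm F r) (Fm F l) (Fm F r)
  ** ((F2_rl_inv ** Ff F eta ** F0 F) ## id2 (Fm F r)) ** lun2_inv (Fm F r)
  = id2 (Fm F r).
Proof.
  destruct Hduality as [_ zigzag_r].
  destruct (F2_iso F r (tens l r)) as [q1 Hq1]. destruct (F2_iso F r munit) as [q2 Hq2].
  assert (Hassoc : q1 ** (Ff F (massoc r l r) ** F2 F (tens r l) r)
     = ((id2 (Fm F r) ## F2 F l r) ** assoc2 (Fm F r) (Fm F l) (Fm F r))
       ** (F2_rl_inv ## id2 (Fm F r))).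
  { eapply inverse2_square; [apply inverse2_whisker_r, HF2_rl | exact Hq1 |].
    rewrite <- vcomp_assoc. apply F_assoc. }
  vnorm_in Hassoc.
  assert (Hnat_eps : (id2 (Fm F r) ## Ff F eps) ** q1 = q2 ** Ff F (tensm (idm r) eps)).
  { symmetry. eapply inverse2_square; [exact Hq1 | exact Hq2 |].
    rewrite F2_nat, Ff_id. reflexivity. }
  assert (Hnat_eta : F2 F (tens r l) r ** (Ff F eta ## id2 (Fm F r))
                   = Ff F (tensm eta (idm r)) ** F2 F munit r).
  { rewrite F2_nat, Ff_id. reflexivity. }
  assert (Hlunit : F2 F munit r ** (F0 F ## id2 (Fm F r)) ** lun2_inv (Fm F r)
                 = Ff F (mlun_inv r)).
  { apply (inverse2_cancel_l _ _ _ _ (Ff_inverse2 (mlun r) (mlun_inv r)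
                                        (mlun_iso1 r) (mlun_iso2 r))).
    vnorm. vrewrite (F_lunit F r). rewrite lun2_iso2, <- Ff_comp, mlun_iso2.
    symmetry. apply Ff_id. }
  assert (Hrunit : run2 (Fm F r) ** (id2 (Fm F r) ## F0_inv) ** q2 = Ff F (mrun r)).
  { rewrite <- (F_runit F r). vnorm.
    vcancel (inverse2_whisker_l (Fm F r) _ _ HF0). vcancel Hq2. reflexivity. }
  repeat rewrite whisker_r_vcomp. repeat rewrite whisker_l_vcomp. vnorm.
  vrewrite (eq_sym Hassoc). vrewrite Hnat_eps. vrewrite Hnat_eta.
  vrewrite Hlunit. vrewrite Hrunit.
  repeat rewrite <- Ff_comp. rewrite zigzag_r. apply Ff_id.
Qed.

Lemma pseudofun_adjunction :
  is_adjunction (Fm F l) (Fm F r) (F2_rl_inv ** Ff F eta ** F0 F)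
                (F0_inv ** Ff F eps ** F2 F l r).
Proof. split; [exact pseudofun_zigzag_l | exact pseudofun_zigzag_r]. Qed.

End Pseudofunctor.

Section Halfbraiding.
Context {E : MonCat} {K : Bicat} (F G : PseudoFun E K) (M : c1 (Fob F) (Fob G)).

Section Left.
Context (s : forall X : E, c2 (hcomp1 M (Fm F X)) (hcomp1 (Fm G X) M)).
Hypothesis Hs : left_halfbraiding F G M s.

Lemma left_halfbraiding_unit (X r : E) (eta : hom munit (tens r X)) {F2_inv G2_inv} :
  inverse2 (F2 F r X) F2_inv -> inverse2 (F2 G r X) G2_inv ->
  assoc2_inv (Fm G r) (Fm G X) M ** (id2 (Fm G r) ## s X) ** assoc2 (Fm G r) M (Fm F X)
  ** (s r ## id2 (Fm F X)) ** assoc2_inv M (Fm F r) (Fm F X)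
  ** (id2 M ## (F2_inv ** Ff F eta ** F0 F)) ** run2_inv M
  = ((G2_inv ** Ff G eta ** F0 G) ## id2 M) ** lun2_inv M.
Proof.
  intros HF2 HG2. destruct Hs as (Hnat & Htens & Hunit).
  assert (Htens' : assoc2_inv (Fm G r) (Fm G X) M ** (id2 (Fm G r) ## s X)
                   ** assoc2 (Fm G r) M (Fm F X) ** (s r ## id2 (Fm F X))
                 = (G2_inv ## id2 M) ** s (tens r X) ** (id2 M ## F2 F r X)
                   ** assoc2 M (Fm F r) (Fm F X)).
  { rewrite <- (Htens r X). vnorm. vcancel (inverse2_whisker_r _ _ M HG2). reflexivity. }
  repeat rewrite whisker_r_vcomp. repeat rewrite whisker_l_vcomp. vnorm.
  vrewrite Htens'. vrewrite (assoc2_iso2 M (Fm F r) (Fm F X)).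
  vcancel (inverse2_whisker_l M _ _ HF2).
  vrewrite (eq_sym (Hnat _ _ eta)). vrewrite Hunit. reflexivity.
Qed.

Lemma left_halfbraiding_counit (X r : E) (eps : hom (tens X r) munit) {F0_inv G0_inv} :
  inverse2 (F0 F) F0_inv -> inverse2 (F0 G) G0_inv ->
  lun2 M ** ((G0_inv ** Ff G eps ** F2 G X r) ## id2 M) ** assoc2_inv (Fm G X) (Fm G r) M
  ** (id2 (Fm G X) ## s r) ** assoc2 (Fm G X) M (Fm F r) ** (s X ## id2 (Fm F r))
  = run2 M ** (id2 M ## (F0_inv ** Ff F eps ** F2 F X r)) ** assoc2 M (Fm F X) (Fm F r).
Proof.
  intros HF0 HG0. destruct Hs as (Hnat & Htens & Hunit).
  assert (Hunit' : s munit = (F0 G ## id2 M) ** lun2_inv M ** run2 M ** (id2 M ## F0_inv)).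
  { vrewrite (eq_sym Hunit). vrewrite (run2_iso1 M).
    vcancel (inverse2_whisker_l M _ _ HF0). reflexivity. }
  repeat rewrite whisker_r_vcomp. repeat rewrite whisker_l_vcomp. vnorm.
  rewrite (Htens X r). vnorm. vrewrite (Hnat _ _ eps). rewrite Hunit'. vnorm.
  vcancel (inverse2_whisker_r _ _ M HG0). vrewrite (lun2_iso2 M). reflexivity.
Qed.

End Left.

Section Right.
Context (s : forall X : E, c2 (hcomp1 (Fm G X) M) (hcomp1 M (Fm F X))).
Hypothesis Hs : right_halfbraiding F G M s.

Lemma right_halfbraiding_unit (X l : E) (eta : hom munit (tens X l)) {F2_inv G2_inv} :
  inverse2 (F2 F X l) F2_inv -> inverse2 (F2 G X l) G2_inv ->
  assoc2 M (Fm F X) (Fm F l) ** (s X ## id2 (Fm F l)) ** assoc2_inv (Fm G X) M (Fm F l)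
  ** (id2 (Fm G X) ## s l) ** assoc2 (Fm G X) (Fm G l) M
  ** ((G2_inv ** Ff G eta ** F0 G) ## id2 M) ** lun2_inv M
  = (id2 M ## (F2_inv ** Ff F eta ** F0 F)) ** run2_inv M.
Proof.
  intros HF2 HG2. destruct Hs as (Hnat & Htens & Hunit).
  assert (Htens' : assoc2 M (Fm F X) (Fm F l) ** (s X ## id2 (Fm F l))
                   ** assoc2_inv (Fm G X) M (Fm F l) ** (id2 (Fm G X) ## s l)
                 = (id2 M ## F2_inv) ** s (tens X l) ** (F2 G X l ## id2 M)
                   ** assoc2_inv (Fm G X) (Fm G l) M).
  { rewrite (Htens X l). vnorm. vcancel (inverse2_whisker_l M _ _ HF2). reflexivity. }
  repeat rewrite whisker_r_vcomp. repeat rewrite whisker_l_vcomp. vnorm.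
  vrewrite Htens'. vrewrite (assoc2_iso1 (Fm G X) (Fm G l) M).
  vcancel (inverse2_whisker_r _ _ M HG2).
  vrewrite (eq_sym (Hnat _ _ eta)). vrewrite Hunit. reflexivity.
Qed.

Lemma right_halfbraiding_counit (X l : E) (eps : hom (tens l X) munit) {F0_inv G0_inv} :
  inverse2 (F0 F) F0_inv -> inverse2 (F0 G) G0_inv ->
  run2 M ** (id2 M ## (F0_inv ** Ff F eps ** F2 F l X)) ** assoc2 M (Fm F l) (Fm F X)
  ** (s l ## id2 (Fm F X)) ** assoc2_inv (Fm G l) M (Fm F X) ** (id2 (Fm G l) ## s X)
  = lun2 M ** ((G0_inv ** Ff G eps ** F2 G l X) ## id2 M) ** assoc2_inv (Fm G l) (Fm G X) M.
Proof.
  intros HF0 HG0. destruct Hs as (Hnat & Htens & Hunit).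
  assert (Hunit' : s munit = (id2 M ## F0 F) ** run2_inv M ** lun2 M ** (G0_inv ## id2 M)).
  { vrewrite (eq_sym Hunit). vrewrite (lun2_iso1 M).
    vcancel (inverse2_whisker_r _ _ M HG0). reflexivity. }
  repeat rewrite whisker_r_vcomp. repeat rewrite whisker_l_vcomp. vnorm.
  rewrite <- (Htens l X). vnorm. vrewrite (Hnat _ _ eps). rewrite Hunit'. vnorm.
  vcancel (inverse2_whisker_l M _ _ HF0). vrewrite (run2_iso2 M). reflexivity.
Qed.

End Right.

Lemma left_halfbraiding_iso2 (s : forall X : E, c2 (hcomp1 M (Fm F X)) (hcomp1 (Fm G X) M))
    (X r : E) (eta : hom munit (tens r X)) (eps : hom (tens X r) munit) :
  is_strict2 K -> is_duality X r eta eps -> left_halfbraiding F G M s -> iso2 (s X).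
Proof.
  intros HK Hd Hs.
  destruct (F2_iso F r X) as [F2_inv HF2]. destruct (F2_iso G r X) as [G2_inv HG2].
  destruct (F0_iso F) as [F0_inv HF0]. destruct (F0_iso G) as [G0_inv HG0].
  eexists; split.
  - eapply left_mate_vcomp; [exact HK | exact (pseudofun_adjunction F Hd HF2 HF0) |].
    exact (left_halfbraiding_counit s Hs X r eps HF0 HG0).
  - eapply vcomp_left_mate; [exact HK | exact (pseudofun_adjunction G Hd HG2 HG0) |].
    exact (left_halfbraiding_unit s Hs X r eta HF2 HG2).
Qed.

Lemma right_halfbraiding_iso2 (s : forall X : E, c2 (hcomp1 (Fm G X) M) (hcomp1 M (Fm F X)))
    (X l : E) (eta : hom munit (tens X l)) (eps : hom (tens l X) munit) :
  is_strict2 K -> is_duality l X eta eps -> right_halfbraiding F G M s -> iso2 (s X).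
Proof.
  intros HK Hd Hs.
  destruct (F2_iso F X l) as [F2_inv HF2]. destruct (F2_iso G X l) as [G2_inv HG2].
  destruct (F0_iso F) as [F0_inv HF0]. destruct (F0_iso G) as [G0_inv HG0].
  eexists; split.
  - eapply right_mate_vcomp; [exact HK | exact (pseudofun_adjunction G Hd HG2 HG0) |].
    exact (right_halfbraiding_counit s Hs X l eps HF0 HG0).
  - eapply vcomp_right_mate; [exact HK | exact (pseudofun_adjunction F Hd HF2 HF0) |].
    exact (right_halfbraiding_unit s Hs X l eta HF2 HG2).
Qed.

End Halfbraiding.

Section Inverse_halfbraiding.
Context {E : MonCat} {K : Bicat} (F G : PseudoFun E K) (M : c1 (Fob F) (Fob G))
  (s : forall X : E, c2 (hcomp1 M (Fm F X)) (hcomp1 (Fm G X) M))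
  (s' : forall X : E, c2 (hcomp1 (Fm G X) M) (hcomp1 M (Fm F X))).
Hypothesis Hinv : forall X, inverse2 (s X) (s' X).

Lemma inverse2_halfbraiding_tensor (Y X : E) :
  inverse2 ((id2 (Fm G Y) ## s X) ** assoc2 (Fm G Y) M (Fm F X) ** (s Y ## id2 (Fm F X)))
           ((s' Y ## id2 (Fm F X)) ** assoc2_inv (Fm G Y) M (Fm F X) ** (id2 (Fm G Y) ## s' X)).
Proof.
  rewrite (vcomp_assoc (s' Y ## id2 (Fm F X))).
  apply inverse2_vcomp; [apply inverse2_vcomp |].
  - apply inverse2_whisker_r, Hinv.
  - apply inverse2_assoc2.
  - apply inverse2_whisker_l, Hinv.
Qed.

Lemma left_right_halfbraiding_inverse :
  left_halfbraiding F G M s <-> right_halfbraiding F G M s'.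
Proof.
  split.
  - intros (Hnat & Htens & Hunit). split; [|split].
    + intros X Y f. symmetry. eapply inverse2_square; [apply Hinv | apply Hinv | apply Hnat].
    + intros Y X.
      assert (H := inverse2_square _ _ _ _
                     ((F2 G Y X ## id2 M) ** assoc2_inv (Fm G Y) (Fm G X) M)
                     ((id2 M ## F2 F Y X) ** assoc2 M (Fm F Y) (Fm F X))
                     (inverse2_halfbraiding_tensor Y X) (Hinv (tens Y X))).
      vnorm_in H. apply H. vnorm. apply Htens.
    + rewrite <- Hunit. vnorm. vcancel (Hinv munit). reflexivity.
  - intros (Hnat & Htens & Hunit). split; [|split].
    + intros X Y f. symmetry.
      eapply inverse2_square; [apply inverse2_sym, Hinv | apply inverse2_sym, Hinv | apply Hnat].
    + intros Y X.
      assert (H := inverse2_square _ _ _ _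
                     ((id2 M ## F2 F Y X) ** assoc2 M (Fm F Y) (Fm F X))
                     ((F2 G Y X ## id2 M) ** assoc2_inv (Fm G Y) (Fm G X) M)
                     (inverse2_sym _ _ (inverse2_halfbraiding_tensor Y X))
                     (inverse2_sym _ _ (Hinv (tens Y X)))).
      vnorm_in H. symmetry. apply H. vnorm. symmetry. apply Htens.
    + rewrite <- Hunit. vnorm. vcancel (Hinv munit). reflexivity.
Qed.

End Inverse_halfbraiding.

Lemma left_right_hom_inverse {E : MonCat} {K : Bicat} (F G : PseudoFun E K)
    (M N : c1 (Fob F) (Fob G))
    (s : forall X : E, c2 (hcomp1 M (Fm F X)) (hcomp1 (Fm G X) M))
    (s' : forall X : E, c2 (hcomp1 (Fm G X) M) (hcomp1 M (Fm F X)))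
    (t : forall X : E, c2 (hcomp1 N (Fm F X)) (hcomp1 (Fm G X) N))
    (t' : forall X : E, c2 (hcomp1 (Fm G X) N) (hcomp1 N (Fm F X))) (f : c2 M N) :
  (forall X, inverse2 (s X) (s' X)) -> (forall X, inverse2 (t X) (t' X)) ->
  (left_hom F G M N s t f <-> right_hom F G M N s' t' f).
Proof.
  intros Hs Ht. split; intros H X; symmetry.
  - eapply inverse2_square; [apply Hs | apply Ht | apply H].
  - eapply inverse2_square; [apply inverse2_sym, Hs | apply inverse2_sym, Ht | apply H].
Qed.

Theorem proposition3p14 :
  forall (K : Bicat) (E : MonCat),
    is_strict2 K -> autonomous_bicat K -> autonomous_moncat E ->
    forall F G : PseudoFun E K,
      (* Z^{w-ps}_l = Z^{s-ps}_l : every left half-braiding is invertible *)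
      (forall (M : c1 (Fob F) (Fob G))
              (s : forall X : E, c2 (hcomp1 M (Fm F X)) (hcomp1 (Fm G X) M)),
          left_halfbraiding F G M s -> forall X, iso2 (s X)) /\
      (* Z^{w-ps}_r = Z^{s-ps}_r : every right half-braiding is invertible *)
      (forall (M : c1 (Fob F) (Fob G))
              (s : forall X : E, c2 (hcomp1 (Fm G X) M) (hcomp1 M (Fm F X))),
          right_halfbraiding F G M s -> forall X, iso2 (s X)) /\
      (* (M, sigma) |-> (M, sigma^{-1}) is a bijection on objects Z^s_l <-> Z^s_r *)
      (forall (M : c1 (Fob F) (Fob G))
              (s : forall X : E, c2 (hcomp1 M (Fm F X)) (hcomp1 (Fm G X) M))
              (s' : forall X : E, c2 (hcomp1 (Fm G X) M) (hcomp1 M (Fm F X))),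
          (forall X, inverse2 (s X) (s' X)) ->
          (left_halfbraiding F G M s <-> right_halfbraiding F G M s')) /\
      (* ... and is identity (hence bijective) on morphisms *)
      (forall (M N : c1 (Fob F) (Fob G))
              (s : forall X : E, c2 (hcomp1 M (Fm F X)) (hcomp1 (Fm G X) M))
              (s' : forall X : E, c2 (hcomp1 (Fm G X) M) (hcomp1 M (Fm F X)))
              (t : forall X : E, c2 (hcomp1 N (Fm F X)) (hcomp1 (Fm G X) N))
              (t' : forall X : E, c2 (hcomp1 (Fm G X) N) (hcomp1 N (Fm F X)))
              (f : c2 M N),
          left_halfbraiding F G M s -> left_halfbraiding F G N t ->
          (forall X, inverse2 (s X) (s' X)) -> (forall X, inverse2 (t X) (t' X)) ->
          (left_hom F G M N s t f <-> right_hom F G M N s' t' f)).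
Proof.
  intros K E HK _ HE F G. split; [|split; [|split]].
  - intros M s Hs X.
    destruct (HE X) as [(r & eta & eps & Hd) _].
    exact (left_halfbraiding_iso2 F G M s X r eta eps HK Hd Hs).
  - intros M s Hs X.
    destruct (HE X) as [_ (l & eta & eps & Hd)].
    exact (right_halfbraiding_iso2 F G M s X l eta eps HK Hd Hs).
  - intros M s s' Hinv. exact (left_right_halfbraiding_inverse F G M s s' Hinv).
  - intros M N s s' t t' f _ _. apply left_right_hom_inverse.
Qed.
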